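(* For every $n\ge 3$, if $P$ is chosen uniformly at random from $\mathrm{Motz}^{\{1,2\}}(n)$, then the expected number of up steps and the expected number of down steps of $P$ both equal $\dfrac{n^2+n-6}{4n-6}$, and the expected number of umber steps and the expected number of denim steps both equal $\dfrac{n^2-4n+6}{4n-6}$.
   Context: $\mathrm{Motz}^{\{1,2\}}(n)$ is the set of lattice paths from $(0,0)$ to $(n,0)$ with steps $U=(1,1)$, $D=(1,-1)$ and horizontal steps $(1,0)$ colored umber or denim, never going below the $x$-axis, such that no umber step occurs at height $0$ and no denim step occurs before the first down step. *)

From HB Require Import structures.
From mathcomp Require Import all_boot all_order all_algebra.
Set Implicit Arguments. Unset Strict Implicit. Unset Printing Implicit Defensive.

(* Steps of a Motzkin-type path: U = (1,1), D = (1,-1),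
   Hu = horizontal (1,0) coloured umber, Hd = horizontal (1,0) coloured denim. *)
Inductive step := U | D | Hu | Hd.

Definition step_to_ord (s : step) : 'I_4 :=
  match s with U => inord 0 | D => inord 1 | Hu => inord 2 | Hd => inord 3 end.
Definition ord_to_step (i : 'I_4) : step :=
  match val i with 0 => U | 1 => D | 2 => Hu | _ => Hd end.
Lemma step_to_ordK : cancel step_to_ord ord_to_step.
Proof. by case; rewrite /ord_to_step /= inordK. Qed.

HB.instance Definition _ := Equality.copy step (can_type step_to_ordK).
HB.instance Definition _ := Finite.copy step (can_type step_to_ordK).

Fixpoint motz_from (h : nat) (seenD : bool) (s : seq step) : bool :=
  match s with
  | [::] => h == 0
  | U :: s' => motz_from h.+1 seenD s'
  | D :: s' => (0 < h) && motz_from h.-1 true s'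
  | Hu :: s' => (0 < h) && motz_from h seenD s'
  | Hd :: s' => seenD && motz_from h seenD s'
  end.

Definition motz12 (n : nat) : {set n.-tuple step} :=
  [set p : n.-tuple step | motz_from 0 false p].

Definition expect (n : nat) (X : seq step -> nat) : rat :=
  ((\sum_(p in motz12 n) X (val p))%:R / #|motz12 n|%:R)%R.

(* Let [ncompl m h s] count the words of length [m] completing a path of
   Motz^{1,2} from height [h], [s] recording whether a down step has already
   occurred, and let [stepsum c m h s] be the total number of [c] steps in
   these words; both obey a first-step recurrence.  After the first down
   step the paths are Motzkin paths with two horizontal colours above the
   axis and one on it, i.e. halved Dyck-type paths, so the counts are ballot
   numbers C(2m, m+h) - C(2m, m+h+1) and the step totals are similar
   binomial expressions; these closed forms are checked by induction on [m].
   A path of Motz^{1,2}(k+3) starts with U, and at the root every quantity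
   becomes a rational multiple of C(2k+1, k+1).  Finally, every path has as
   many U as D steps and n steps in all, which gives the expected numbers of
   D and of denim steps. *)
From mathcomp Require Import all_boot all_order all_algebra.
From mathcomp Require Import ring lra zify.
Import GRing.Theory Num.Theory.
Local Open Scope ring_scope.

Lemma sum_tupleS {T : finType} {R : nmodType} {m} (F : seq T -> R) :
  \sum_(t : m.+1.-tuple T) F t = \sum_(x : T) \sum_(t : m.-tuple T) F (x :: t).
Proof.
rewrite pair_big /= (reindex (fun p : T * m.-tuple T => [tuple of p.1 :: p.2])) //=.
exists (fun t : m.+1.-tuple T => (thead t, [tuple of behead t])).
  by move=> [x t] _ /=; congr pair; apply: val_inj.
by move=> t _; rewrite [t in RHS]tuple_eta.
Qed.

Definition step_code (x : step) : nat :=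
  match x with U => 0 | D => 1 | Hu => 2 | Hd => 3 end.

Lemma eq_stepE (x y : step) : (x == y) = (step_code x == step_code y).
Proof. by apply/eqP/eqP => [->|]; case: x; case: y. Qed.

Lemma sum_step (R : nmodType) (F : step -> R) :
  \sum_(x : step) F x = F U + F D + F Hu + F Hd.
Proof.
have uniq_steps : uniq [:: U; D; Hu; Hd] by rewrite /= !inE !eq_stepE.
rewrite (eq_bigl (mem [:: U; D; Hu; Hd])); last by case; rewrite !inE !eq_stepE.
by rewrite -big_uniq // !big_cons big_nil /= addr0 !addrA.
Qed.

Lemma count_steps (t : seq step) :
  (count_mem U t + count_mem D t + count_mem Hu t + count_mem Hd t)%N = size t.
Proof. by elim: t => //= x t IH; case: x; rewrite !eq_stepE /=; lia. Qed.

Lemma count_D_motz_from h s (t : seq step) :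
  motz_from h s t -> count_mem D t = (count_mem U t + h)%N.
Proof.
elim: t h s => [|x t IH] h s /=; first by move/eqP->.
case: x; rewrite !eq_stepE /=.
- by move/IH ->; rewrite addnS addSn.
- by case: h => [|h] /andP [h_gt0 /IH ->] /=; lia.
- by case/andP => _ /IH ->.
- by case/andP => _ /IH ->.
Qed.

Definition compl_sum (f : seq step -> rat) (m h : nat) (s : bool) : rat :=
  \sum_(t : m.-tuple step) (if motz_from h s t then f t else 0).

Definition ncompl := compl_sum (fun=> 1).
Definition stepsum (c : step) := compl_sum (fun t => (count_mem c t)%:R).

Lemma compl_sum0 f h s : compl_sum f 0 h s = (h == 0)%:R * f [::].
Proof.
rewrite /compl_sum (big_pred1 [tuple]) => [|t]; last first.
  by symmetry; apply/eqP; exact: tuple0.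
by case: h => [|h]; rewrite ?mul1r ?mul0r.
Qed.

Lemma compl_sumS f m h s : compl_sum f m.+1 h s =
    compl_sum (fun t => f (U :: t)) m h.+1 s
  + (0 < h)%:R * compl_sum (fun t => f (D :: t)) m h.-1 true
  + (0 < h)%:R * compl_sum (fun t => f (Hu :: t)) m h s
  + s%:R * compl_sum (fun t => f (Hd :: t)) m h s.
Proof.
rewrite /compl_sum (sum_tupleS (fun t => if motz_from h s t then f t else 0)).
rewrite sum_step /=.
have sum0 (g : seq step -> rat) :
  \sum_(t : m.-tuple step) (if false then g t else 0) = 0 by apply: big1.
by case: (0 < h)%N; case: s; rewrite ?mul1r ?mul0r /= ?sum0.
Qed.

Lemma ncomplS m h s : ncompl m.+1 h s =
  ncompl m h.+1 s + (0 < h)%:R * ncompl m h.-1 true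
  + (0 < h)%:R * ncompl m h s + s%:R * ncompl m h s.
Proof. exact: compl_sumS. Qed.

Lemma stepsum0 c h s : stepsum c 0 h s = 0.
Proof. by rewrite /stepsum compl_sum0 mulr0. Qed.

Lemma stepsum_cons c x m h s :
  compl_sum (fun t => (count_mem c (x :: t))%:R) m h s =
  (x == c)%:R * ncompl m h s + stepsum c m h s.
Proof.
rewrite /ncompl /stepsum /compl_sum mulr_sumr -big_split /=.
by apply: eq_bigr => t _; case: ifP; rewrite ?mulr0 ?addr0 // mulr1 natrD.
Qed.

Lemma stepsumS c m h s : stepsum c m.+1 h s =
    ((U == c)%:R * ncompl m h.+1 s + stepsum c m h.+1 s)
  + (0 < h)%:R * ((D == c)%:R * ncompl m h.-1 true + stepsum c m h.-1 true)
  + (0 < h)%:R * ((Hu == c)%:R * ncompl m h s + stepsum c m h s)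
  + s%:R * ((Hd == c)%:R * ncompl m h s + stepsum c m h s).
Proof. by rewrite /stepsum compl_sumS !stepsum_cons. Qed.

Lemma stepsum_D_root m : stepsum D m 0 false = stepsum U m 0 false.
Proof.
apply: eq_bigr => t _; case: ifP => // /count_D_motz_from ->.
by rewrite addn0.
Qed.

Lemma stepsum_total m h s :
  stepsum U m h s + stepsum D m h s + stepsum Hu m h s + stepsum Hd m h s =
  m%:R * ncompl m h s.
Proof.
rewrite /stepsum /ncompl /compl_sum -!big_split mulr_sumr /=.
apply: eq_bigr => t _; case: ifP; rewrite ?addr0 ?mulr0 // => _.
by rewrite -!natrD count_steps size_tuple mulr1.
Qed.

Lemma stepsum_Hd_root m : stepsum Hd m 0 false =
  m%:R * ncompl m 0 false - 2 * stepsum U m 0 false - stepsum Hu m 0 false.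
Proof. by rewrite -stepsum_total stepsum_D_root; ring. Qed.

Lemma expect_stepsum n c :
  expect n (count_mem c) = stepsum c n 0 false / ncompl n 0 false.
Proof.
rewrite /expect -sum1_card !natr_sum /stepsum /ncompl /compl_sum.
rewrite !(big_mkcond (mem (motz12 n))) /=.
by congr (_ / _); apply: eq_bigr => t _; rewrite inE.
Qed.

Definition binr (n k : nat) : rat := 'C(n, k)%:R.

Lemma binrS n k : binr n.+1 k.+1 = binr n k + binr n k.+1.
Proof. by rewrite /binr binS natrD addrC. Qed.

Lemma binrSS n k : binr n.+2 k.+2 = binr n k + 2 * binr n k.+1 + binr n k.+2.
Proof. by rewrite !binrS; ring. Qed.

Lemma binr_sym n k l : (k + l)%N = n -> binr n k = binr n l.
Proof. by move=> <-; rewrite /binr -(bin_sub (leq_addl k l)) addnK. Qed.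

Lemma binr_succ n k : binr n k.+1 = (n - k)%:R / k.+1%:R * binr n k.
Proof.
by rewrite /binr mulrAC -natrM -mul_bin_left natrM [_ * _%:R]mulrC mulfK ?pnatr_eq0.
Qed.

Definition ballot m h := binr m.*2 (m + h) - binr m.*2 (m + h).+1.

Lemma ncompl_seen m h : ncompl m h true = ballot m h.
Proof.
elim: m h => [|m IH] h; first by rewrite /ncompl compl_sum0 /ballot /binr; case: h.
rewrite ncomplS !IH; case: h => [|h] /=.
  rewrite !mul0r !mul1r !addr0 /ballot.
  case: m {IH} => [|m]; first by rewrite /binr.
  rewrite !addn0 !addnS !addSn !addn0 !doubleS !binrS.
  rewrite (binr_sym (m.*2).+2 m m.+2); last by rewrite -addnn !addnS.
  rewrite !binrS; ring.
by rewrite !mul1r /ballot !doubleS !addnS !addSn !binrS; ring.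
Qed.

Definition usum_seen m h :=
  (h%:R + 1) * binr m.*2 (m + h).+1 + h%:R * binr m.*2 (m + h).+2.

Definition husum_seen m h :=
  h%:R * binr m.*2 (m + h) + h%:R * binr m.*2 (m + h).+1 + binr m.*2 (m + h).+2.

Lemma stepsum_U_seen m h : stepsum U m.+1 h true = usum_seen m h.
Proof.
elim: m h => [|m IH] h.
  rewrite stepsumS !eq_stepE /= !stepsum0 /ncompl !compl_sum0 /usum_seen /binr /=.
  by case: h => [|h]; rewrite /= ?mul0r ?mulr0 ?addr0.
rewrite stepsumS !eq_stepE /= !ncompl_seen !IH; case: h => [|h] /=;
  rewrite /usum_seen /ballot ?mul0r ?mul1r ?addr0 ?add0r !addnS !addSn ?addn0;
  by rewrite !doubleS !binrS; ring.
Qed.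

Lemma stepsum_Hu_seen m h : stepsum Hu m.+1 h true = husum_seen m h.
Proof.
elim: m h => [|m IH] h.
  rewrite stepsumS !eq_stepE /= !stepsum0 /ncompl !compl_sum0 /husum_seen /binr /=.
  by case: h => [|h]; rewrite /= ?mul0r ?mulr0 ?addr0.
rewrite stepsumS !eq_stepE /= !ncompl_seen !IH; case: h => [|h] /=;
  rewrite /husum_seen /ballot ?mul0r ?mul1r ?addr0 ?add0r !addnS !addSn ?addn0;
  by rewrite !doubleS !binrS; ring.
Qed.

Definition ballot_odd m h := binr m.*2.+1 (m + h).+1 - binr m.*2.+1 (m + h).+2.

Lemma ncompl_unseen m h : ncompl m.+1 h.+1 false = ballot_odd m h.
Proof.
elim: m h => [|m IH] h.
  rewrite ncomplS /= ncompl_seen /ncompl !compl_sum0 /ballot_odd /ballot /binr /=.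
  by case: h => [|h]; rewrite /= ?mul0r ?mulr0 ?addr0.
rewrite ncomplS /= !ncompl_seen !IH /ballot_odd /ballot ?mul0r ?mul1r ?addr0 ?add0r.
by rewrite !addnS !addSn ?addn0 !doubleS !binrS; ring.
Qed.

Definition usum_unseen m h :=
  (h%:R + 2) * binr m.*2.+1 (m + h).+2 + h%:R * binr m.*2.+1 (m + h).+3.

Definition husum_unseen m h :=
  (h%:R + 1) * binr m.*2.+1 (m + h).+1 + h%:R * binr m.*2.+1 (m + h).+2
  + binr m.*2.+1 (m + h).+3.

Lemma stepsum_unseen1 c h : c != D -> stepsum c 1 h.+1 false = 0.
Proof.
rewrite stepsumS !stepsum0 /ncompl !compl_sum0 /= !mul0r !mulr0 !addr0 !add0r.
by case: c; rewrite !eq_stepE // mul0r.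
Qed.

Lemma stepsum_U_unseen m h : stepsum U m.+2 h.+1 false = usum_unseen m h.
Proof.
elim: m h => [|m IH] h.
  rewrite stepsumS !eq_stepE /= !stepsum_unseen1 ?eq_stepE // stepsum_U_seen.
  rewrite /usum_unseen /usum_seen /binr /=.
  by case: h => [|h];
    rewrite /= ?ncompl_unseen /ballot_odd /binr /= ?mul0r ?mulr0 ?addr0 ?add0r.
rewrite stepsumS !eq_stepE /= !ncompl_unseen !stepsum_U_seen !IH.
rewrite /usum_unseen /ballot_odd /usum_seen ?mul0r ?mul1r ?addr0 ?add0r.
by rewrite !addnS !addSn ?addn0 !doubleS !binrS; ring.
Qed.

Lemma stepsum_Hu_unseen m h : stepsum Hu m.+2 h.+1 false = husum_unseen m h.
Proof.
elim: m h => [|m IH] h.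
  rewrite stepsumS !eq_stepE /= !stepsum_unseen1 ?eq_stepE // stepsum_Hu_seen.
  rewrite /husum_unseen /husum_seen /binr /=.
  by case: h => [|h];
    rewrite /= ?ncompl_unseen /ballot_odd /binr /= ?mul0r ?mulr0 ?addr0 ?add0r.
rewrite stepsumS !eq_stepE /= !ncompl_unseen !stepsum_Hu_seen !IH.
rewrite /husum_unseen /ballot_odd /husum_seen ?mul0r ?mul1r ?addr0 ?add0r.
by rewrite !addnS !addSn ?addn0 !doubleS !binrS; ring.
Qed.

Lemma binr_mid_pred k : binr k.*2.+1 k = binr k.*2.+1 k.+1.
Proof. by apply: binr_sym; rewrite -addnn addnS. Qed.

Lemma binr_mid_succ k :
  binr k.*2.+1 k.+2 = k%:R / (k%:R + 2) * binr k.*2.+1 k.+1.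
Proof.
rewrite binr_succ.
have -> : (k.*2.+1 - k.+1)%N = k by lia.
by rewrite -addn2 natrD.
Qed.

Lemma binr_mid_succ2 k : binr k.*2.+1 k.+3 =
  (k%:R - 1) * k%:R / ((k%:R + 2) * (k%:R + 3)) * binr k.*2.+1 k.+1.
Proof.
rewrite binr_succ binr_mid_succ -addn3 natrD.
case: k => [|j]; first by rewrite /= !(mul0r, mulr0).
have -> : (j.+1.*2.+1 - j.+3)%N = j by lia.
have j_ge0 : 0 <= j%:R :> rat := ler0n rat j.
by rewrite -addn1 natrD; field; lra.
Qed.

Lemma ncompl_root k : ncompl k.+3 0 false =
  4 * (2 * k%:R + 3) / ((k%:R + 2) * (k%:R + 3)) * binr k.*2.+1 k.+1.
Proof.
rewrite ncomplS /= !mul0r !addr0 ncompl_unseen /ballot_odd addn0 doubleS !binrSS.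
rewrite binr_mid_pred binr_mid_succ2 binr_mid_succ.
have k_ge0 : 0 <= k%:R :> rat := ler0n rat k.
by field; lra.
Qed.

Lemma stepsum_U_root k : stepsum U k.+3 0 false =
  2 * (k%:R + 1) * (k%:R + 6) / ((k%:R + 2) * (k%:R + 3)) * binr k.*2.+1 k.+1.
Proof.
rewrite stepsumS !eq_stepE /= !mul0r !addr0 mul1r.
rewrite ncompl_unseen stepsum_U_unseen /ballot_odd /usum_unseen.
rewrite !addn0 add0r mul0r addr0 doubleS !binrSS.
rewrite binr_mid_pred binr_mid_succ2 binr_mid_succ.
have k_ge0 : 0 <= k%:R :> rat := ler0n rat k.
by field; lra.
Qed.

Lemma stepsum_Hu_root k : stepsum Hu k.+3 0 false =
  2 * (k%:R ^+ 2 + 2 * k%:R + 3) / ((k%:R + 2) * (k%:R + 3)) * binr k.*2.+1 k.+1.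
Proof.
rewrite stepsumS !eq_stepE /= !mul0r !addr0 add0r.
rewrite stepsum_Hu_unseen /husum_unseen !addn0 add0r mul1r mul0r addr0.
rewrite binr_mid_succ2.
have k_ge0 : 0 <= k%:R :> rat := ler0n rat k.
by field; lra.
Qed.

Theorem mainTheorem13 (n : nat) (hn : (3 <= n)%N) :
  let r1 : rat := ((n%:R) ^+ 2 + n%:R - 6) / (4 * n%:R - 6) in
  let r2 : rat := ((n%:R) ^+ 2 - 4 * n%:R + 6) / (4 * n%:R - 6) in
  [/\ expect n (count_mem U) = r1,
      expect n (count_mem D) = r1,
      expect n (count_mem Hu) = r2 &
      expect n (count_mem Hd) = r2].
Proof.
have [k ->] : exists k, n = k.+3 by exists (n - 3)%N; lia.
rewrite /= !expect_stepsum stepsum_D_root stepsum_Hd_root.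
rewrite stepsum_U_root stepsum_Hu_root ncompl_root -addn3 natrD.
have a_gt0 : 0 < binr k.*2.+1 k.+1 by rewrite ltr0n bin_gt0; lia.
have k_ge0 : 0 <= k%:R :> rat := ler0n rat k.
by split; field; lra.
Qed.
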